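(* Let $(G,k)$ be an instance and let $v_1,v_2,v_3,v_4$ be four distinct vertices such that $v_1$ is adjacent to each of $v_2,v_3,v_4$, no two of $v_2,v_3,v_4$ are adjacent, $d(v_1)=3$, and $d(v_4)=1$. Then $(G,k)$ is a yes-instance if and only if $(G-v_4,k)$ is a yes-instance.
   Context: Graphs are undirected, without self-loops, possibly with multi-edges; $d(v)$ is the number of edges incident to $v$ (counted with multiplicity). A vertex set induces a clique if between any two distinct vertices there is exactly one edge, and a tree if it is connected and acyclic (two parallel edges form a cycle). A feasible solution for $(G,k)$ is $X\subseteq V$, $|X|\le k$, with every connected component of $G-X$ a clique or a tree; $(G,k)$ is a yes-instance if one exists. *)

From mathcomp Require Import all_boot.
Set Implicit Arguments. Unset Strict Implicit. Unset Printing Implicit Defensive.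

(* A finite multigraph on vertex type V: m x y = number of edges between x and y. *)
Definition multigraph (V : finType) (m : V -> V -> nat) : Prop :=
  (forall x y, m x y = m y x) /\ (forall x, m x x = 0).

Definition deg (V : finType) (m : V -> V -> nat) (v : V) : nat := \sum_(u : V) m v u.

Definition adjIn (V : finType) (m : V -> V -> nat) (U : {set V}) : rel V :=
  fun x y => [&& x \in U, y \in U & 0 < m x y].

Definition compIn (V : finType) (m : V -> V -> nat) (U : {set V}) (x : V) : {set V} :=
  [set y | connect (adjIn m U) x y].

Definition is_clique (V : finType) (m : V -> V -> nat) (C : {set V}) : Prop :=
  forall x y, x \in C -> y \in C -> x != y -> m x y = 1.

(* C induces an acyclic graph: no two parallel edges (a 2-cycle), and no
   cycle through >= 3 distinct vertices of C *)
Definition is_acyclic (V : finType) (m : V -> V -> nat) (C : {set V}) : Prop :=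
  (forall x y, x \in C -> y \in C -> m x y <= 1) /\
  (forall s : seq V, uniq s -> 3 <= size s -> all (fun x => x \in C) s ->
      ~ cycle (fun x y => 0 < m x y) s).

Definition is_connected_set (V : finType) (m : V -> V -> nat) (C : {set V}) : Prop :=
  forall x y, x \in C -> y \in C -> connect (adjIn m C) x y.

Definition is_tree (V : finType) (m : V -> V -> nat) (C : {set V}) : Prop :=
  is_connected_set m C /\ is_acyclic m C.

(* The instance (G[U], k), where the graph is the subgraph induced on U. *)
Definition feasible (V : finType) (m : V -> V -> nat) (U : {set V}) (k : nat)
    (X : {set V}) : Prop :=
  X \subset U /\ #|X| <= k /\
  forall x, x \in U :\: X ->
    is_clique m (compIn m (U :\: X) x) \/ is_tree m (compIn m (U :\: X) x).

Definition yes_instance (V : finType) (m : V -> V -> nat) (U : {set V}) (k : nat) : Prop :=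
  exists X, feasible m U k X.

From mathcomp Require Import all_boot zify.
Set Implicit Arguments. Unset Strict Implicit. Unset Printing Implicit Defensive.

(* Removing a vertex only shrinks the components of G - X, and a part of a
   clique or tree that is itself a component is again a clique or tree; so a
   solution X for G yields the solution X - v4 for G - v4.  Conversely, v4 is a
   leaf hanging on v1, so a solution X for G - v4 is one for G: putting v4 back
   either leaves it isolated (v1 in X) or attaches it as a leaf to the component
   C of v1.  A leaf keeps an acyclic C acyclic, and if C is a clique it cannot
   contain both non-adjacent neighbours v2, v3 of v1, so it has at most two
   vertices and is acyclic as well. *)

Lemma connect_homo (T T' : finType) (e : rel T) (e' : rel T') (f : T -> T') :
    (forall a b, e a b -> (f a == f b) || e' (f a) (f b)) ->
  forall a b, connect e a b -> connect e' (f a) (f b).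
Proof.
move=> fe a b /connectP[p]; elim: p a => [|c p IHp] a /=; first by move=> _ ->.
case/andP=> eac pc lastb; apply: connect_trans (IHp c pc lastb).
by case/orP: (fe _ _ eac) => [/eqP->|/connect1].
Qed.

Section Degree.

Variables (V : finType) (m : V -> V -> nat).

Lemma sum_le_deg v s : uniq s -> \sum_(u <- s) m v u <= deg m v.
Proof.
move=> us; have := uniq_sub_le_big (op := addn) leqnn (fun x y => leq_addr y x)
  xpredT (m v) us (index_enum_uniq V).
by apply=> u; rewrite mem_index_enum.
Qed.

Lemma deg_eq_size_mem v s u :
  uniq s -> {in s, forall x, 0 < m v x} -> deg m v = size s -> 0 < m v u -> u \in s.
Proof.
move=> us pos_s degv pos_u; apply/negPn/negP => su.
have size_le : size s <= \sum_(x <- s) m v x.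
  by rewrite -sum1_size big_seq [X in _ <= X]big_seq; apply: leq_sum.
have := sum_le_deg v (s := u :: s); rewrite /= su us big_cons degv => /(_ isT).
by move/(leq_trans (leq_add pos_u size_le)); rewrite add1n ltnn.
Qed.

Lemma deg1E w a : deg m w = 1 -> 0 < m w a -> forall u, m w u = (u == a).
Proof.
move=> degw pos_a u; case: (eqVneq u a) => [->|ua].
  by have := sum_le_deg w (s := [:: a]) isT; rewrite big_seq1 degw; lia.
have := sum_le_deg w (s := [:: a; u]); rewrite /= inE eq_sym ua big_cons big_seq1.
by rewrite degw => /(_ isT); lia.
Qed.

End Degree.

Section Components.

Variables (V : finType) (m : V -> V -> nat).
Hypothesis m_sym : forall x y, m x y = m y x.

Definition clique_or_tree (C : {set V}) := is_clique m C \/ is_tree m C.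

Lemma adjIn_sym (U : {set V}) : symmetric (adjIn m U).
Proof. by move=> x y; rewrite /adjIn m_sym andbCA. Qed.

Lemma connect_compIn (U : {set V}) x y :
  connect (adjIn m U) x y -> connect (adjIn m (compIn m U x)) x y.
Proof.
case/connectP=> p xp ->{y}.
suff: forall a, connect (adjIn m U) x a -> path (adjIn m U) a p ->
    connect (adjIn m (compIn m U x)) a (last a p).
  by apply=> //; apply: connect0.
elim: p {xp} => [|b p IHp] a xa /=; first by move=> _; apply: connect0.
case/andP=> ab pb; have xb := connect_trans xa (connect1 ab).
apply: connect_trans (IHp b xb pb); apply: connect1.
by move: ab; rewrite /adjIn !inE xa xb => /and3P[].
Qed.

Lemma compIn_connected (U : {set V}) x : is_connected_set m (compIn m U x).
Proof.
move=> y z; rewrite !inE => xy xz.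
have sym := sym_connect_sym (adjIn_sym (compIn m U x)).
apply: connect_trans (connect_compIn xz).
by rewrite sym; apply: connect_compIn.
Qed.

Lemma mem_compIn (U : {set V}) x y : x \in U -> y \in compIn m U x -> y \in U.
Proof.
rewrite inE => xU /connectP[p]; elim: p x xU => [|b p IHp] a aU /=; first by move=> _ ->.
by case/andP=> /and3P[_ bU _]; apply: IHp.
Qed.

Lemma compIn_notin (U : {set V}) x : x \notin U -> compIn m U x = [set x].
Proof.
move=> xU; apply/setP=> y; rewrite !inE; apply/idP/eqP=> [|->]; last exact: connect0.
by case/connectP=> [[|b p] /=]; [move=> _ -> | rewrite /adjIn (negbTE xU)].
Qed.

Lemma compInS (U U' : {set V}) x : U' \subset U -> compIn m U' x \subset compIn m U x.
Proof.
move=> sUU'; apply/subsetP=> y; rewrite !inE; apply: connect_sub => a b.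
rewrite /adjIn => /and3P[/(subsetP sUU') aU /(subsetP sUU') bU ab].
by rewrite connect1 //= aU bU.
Qed.

Lemma is_cliqueS (C D : {set V}) : C \subset D -> is_clique m D -> is_clique m C.
Proof. by move=> /subsetP sCD cliqueD x y /sCD xD /sCD yD; apply: cliqueD. Qed.

Lemma is_acyclicS (C D : {set V}) : C \subset D -> is_acyclic m D -> is_acyclic m C.
Proof.
move=> /subsetP sCD [simpleD cyclesD]; split=> [x y /sCD xD /sCD yD|s us ss sC].
  exact: simpleD.
by apply: cyclesD => //; apply/allP=> z /(allP sC) /sCD.
Qed.

Lemma compIn_tree (U : {set V}) x (D : {set V}) :
  compIn m U x \subset D -> is_acyclic m D -> is_tree m (compIn m U x).
Proof. by move=> sCD /(is_acyclicS sCD); split; first exact: compIn_connected. Qed.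

Lemma compIn_clique_or_tree (U : {set V}) x (D : {set V}) :
  compIn m U x \subset D -> clique_or_tree D -> clique_or_tree (compIn m U x).
Proof.
move=> sCD [/(is_cliqueS sCD) | [_ /(compIn_tree sCD)]]; [left | right] => //.
Qed.

Lemma feasible_setD1 (U : {set V}) k (X : {set V}) v :
  feasible m U k X -> feasible m (U :\ v) k (X :\ v).
Proof.
case=> sXU [cardX compX]; have sUX : (U :\ v) :\: (X :\ v) \subset U :\: X.
  by apply/subsetP=> y; rewrite !inE; case: (y == v).
split; first by rewrite setSD.
split; first by rewrite (leq_trans _ cardX) // subset_leq_card // subD1set.
move=> x /(subsetP sUX) /compX; exact: compIn_clique_or_tree (compInS _ sUX).
Qed.

End Components.

Section Leaf.

Variables (V : finType) (m : V -> V -> nat) (w a : V).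
Hypotheses (m_sym : forall x y, m x y = m y x) (leaf : forall u, m w u = (u == a)).

Lemma leaf_notin_cycle s :
  uniq s -> 3 <= size s -> cycle (fun x y => 0 < m x y) s -> w \notin s.
Proof.
move=> us size_s cyc_s; apply/negP=> /rot_to[i p rot_s].
move: us size_s cyc_s; rewrite -(rot_uniq i) -(size_rot i) -(rot_cycle i) rot_s.
case: p {rot_s} => [|b [|c p]] //= /and4P[_ bNcp _ _] _.
case/and3P=> wb _; rewrite rcons_path => /andP[_ lastw].
rewrite m_sym leaf lt0b in lastw; rewrite leaf lt0b in wb.
by rewrite (eqP wb) -(eqP lastw) mem_last in bNcp.
Qed.

Lemma is_acyclic_setU1_leaf (C : {set V}) : is_acyclic m C -> is_acyclic m (w |: C).
Proof.
case=> simpleC cyclesC; split=> [x y|s us size_s sC cyc_s].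
  rewrite !inE => /orP[/eqP->|xC] /orP[/eqP->|yC]; rewrite ?[m _ w]m_sym ?leaf ?leq_b1 //.
  exact: simpleC.
have wNs := leaf_notin_cycle us size_s cyc_s.
apply: cyclesC cyc_s => //; apply/allP=> y ys; move/allP/(_ y ys): sC.
by rewrite !inE => /orP[/eqP yw|//]; rewrite -yw ys in wNs.
Qed.

(* Contracting the edge [w a] maps each component of [w |: W] into one of [W]. *)
Definition leaf_retract z := if z == w then a else z.

Lemma retract_compIn (W : {set V}) x y :
  y \in compIn m (w |: W) x -> leaf_retract y \in compIn m W (leaf_retract x).
Proof.
rewrite !inE; apply: connect_homo => b c; rewrite /adjIn /leaf_retract !inE.
case/and3P=> bW cW bc; case: (eqVneq b w) => [bw | bNw].
  by rewrite bw leaf lt0b in bc; rewrite (eqP bc) if_same eqxx.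
case: (eqVneq c w) => [cw | cNw].
  by rewrite cw m_sym leaf lt0b in bc; rewrite (eqP bc) eqxx.
by rewrite (negbTE bNw) (negbTE cNw) /= in bW cW; rewrite bW cW bc orbT.
Qed.

Lemma feasible_setU1_leaf (U : {set V}) k (X : {set V}) :
    w \in U ->
    (forall C : {set V}, is_clique m C -> a \in C -> w \notin C -> is_acyclic m C) ->
  feasible m (U :\ w) k X -> feasible m U k X.
Proof.
move=> wU clique_acyclic [sXUw [cardX compX]].
have wNX : w \notin X by apply/negP=> /(subsetP sXUw); rewrite !inE eqxx.
set W := (U :\ w) :\: X.
have UX_W : U :\: X = w |: W.
  by apply/setP=> y; rewrite !inE; case: (eqVneq y w) => [->|] //=; rewrite wNX wU.
split; first exact: subset_trans sXUw (subD1set _ _).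
split=> // x; rewrite UX_W => xW.
set C0 := compIn m W (leaf_retract x).
have sub_wC0 : compIn m (w |: W) x \subset w |: C0.
  apply/subsetP=> y yC; rewrite in_setU1; case: (eqVneq y w) => //= yNw.
  by have := retract_compIn yC; rewrite {1}/leaf_retract (negbTE yNw).
have [xW' | xNW'] := boolP (leaf_retract x \in W).
  have [aC0 | aNC0] := boolP (a \in C0); last first.
    apply: (compIn_clique_or_tree m_sym _ (compX _ xW')).
    apply/subsetP=> y /retract_compIn; rewrite {1}/leaf_retract.
    by case: eqP => // _; rewrite (negbTE aNC0).
  right; apply: (compIn_tree m_sym sub_wC0); apply: is_acyclic_setU1_leaf.
  have wNC0 : w \notin C0.
    by apply/negP=> /(mem_compIn xW'); rewrite /W !inE eqxx andbF.
  by case: (compX _ xW') => [cliqueC0 | [_ //]]; apply: clique_acyclic.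
(* Here [x = w] and [a] is deleted, so [w] is isolated. *)
left; apply: (is_cliqueS (D := [set w])) => [|y z]; last first.
  by rewrite !inE => /eqP-> /eqP->; rewrite eqxx.
apply/subsetP=> y yC; rewrite inE; apply/negPn/negP=> yNw.
move: (retract_compIn yC) (mem_compIn xW yC); rewrite compIn_notin //.
rewrite {1}/leaf_retract (negbTE yNw) inE in_setU1 (negbTE yNw) => /eqP->.
by rewrite (negbTE xNW').
Qed.

End Leaf.

Section SmallCliques.

Variables (V : finType) (m : V -> V -> nat).
Hypothesis m0 : forall x, m x x = 0.

Lemma is_acyclic_clique_card2 (C : {set V}) :
  #|C| <= 2 -> is_clique m C -> is_acyclic m C.
Proof.
move=> cardC cliqueC; split=> [x y xC yC | s us size_s sC _].
  by case: (eqVneq x y) => [->|xy]; rewrite ?m0 ?cliqueC.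
have : #|s| <= #|C| by apply/subset_leq_card/subsetP=> z /(allP sC).
by rewrite (card_uniqP us); lia.
Qed.

End SmallCliques.

Lemma clique_card_le2 (V : finType) (m : V -> V -> nat) (C : {set V}) v1 v2 v3 v4 :
    (forall u, 0 < m v1 u -> u \in [:: v2; v3; v4]) -> m v2 v3 = 0 -> v2 != v3 ->
  is_clique m C -> v1 \in C -> v4 \notin C -> #|C| <= 2.
Proof.
move=> nbhd1 m23 n23 cliqueC v1C v4NC.
have subC y : y \in C -> [|| y == v1, y == v2 | y == v3].
  move=> yC; case: (eqVneq y v1) => //= yNv1.
  have m1y : 0 < m v1 y by rewrite cliqueC // eq_sym.
  move: (nbhd1 y m1y); rewrite !inE => /or3P[-> | -> | /eqP yv4] //.
    by rewrite orbT.
  by rewrite -yv4 yC in v4NC.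
have le2 b : C \subset [set v1; b] -> #|C| <= 2.
  by move/subset_leq_card/leq_trans; apply; rewrite cards2; case: (_ != _).
have [v3C | v3NC] := boolP (v3 \in C).
  have v2NC : v2 \notin C by apply/negP=> v2C; move: m23; rewrite cliqueC.
  apply: (le2 v3); apply/subsetP=> y yC; rewrite !inE.
  case/or3P: (subC y yC) => [-> // | /eqP yv2 | ->]; last by rewrite orbT.
  by rewrite -yv2 yC in v2NC.
apply: (le2 v2); apply/subsetP=> y yC; rewrite !inE.
case/or3P: (subC y yC) => [-> // | -> | /eqP yv3]; first by rewrite orbT.
by rewrite -yv3 yC in v3NC.
Qed.

Theorem mainTheorem17 (V : finType) (m : V -> V -> nat) (k : nat)
    (v1 v2 v3 v4 : V) :
  multigraph m ->
  uniq [:: v1; v2; v3; v4] ->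
  0 < m v1 v2 -> 0 < m v1 v3 -> 0 < m v1 v4 ->
  m v2 v3 = 0 -> m v2 v4 = 0 -> m v3 v4 = 0 ->
  deg m v1 = 3 -> deg m v4 = 1 ->
  (yes_instance m [set: V] k <-> yes_instance m ([set: V] :\ v4) k).
Proof.
move=> [m_sym m0] uniq_v h12 h13 h14 m23 _ _ deg1 deg4.
have uniq234 : uniq [:: v2; v3; v4] by case/andP: uniq_v.
have n23 : v2 != v3 by move: uniq234; rewrite /= inE negb_or => /andP[/andP[]].
have nbhd1 u : 0 < m v1 u -> u \in [:: v2; v3; v4].
  by apply: deg_eq_size_mem uniq234 _ deg1 => x; rewrite !inE => /or3P[] /eqP->.
have leaf4 : forall u, m v4 u = (u == v1) by apply: deg1E; rewrite // m_sym.
split=> [[X feasX] | [X feasX]]; first by exists (X :\ v4); apply: feasible_setD1.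
exists X; apply: (feasible_setU1_leaf m_sym leaf4) feasX; first by rewrite inE.
move=> C cliqueC v1C v4NC; apply: (is_acyclic_clique_card2 m0 _ cliqueC).
exact: clique_card_le2 nbhd1 m23 n23 cliqueC v1C v4NC.
Qed.
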